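(* Let the setting, algorithm and notation be as described in the context, and assume $\frac12\widehat\Sigma_g+T\succeq0$. Then for every $k\ge1$, \[ (1-\tau)\sigma\|r^{k+1}\|^2+\sigma\|A^*x^{k+1}+B^*y^k-c\|^2\ \ge\ \max(1-\tau,1-\tau^{-1})\,\sigma\big(\|r^{k+1}\|^2-\|r^k\|^2\big)+(\xi_{k+1}-\xi_k)+\min(\tau,1+\tau-\tau^2)\,\sigma\big(\tau^{-1}\|r^{k+1}\|^2+\|B^*(y^{k+1}-y^k)\|^2\big). \]
   Context: Let $\mathcal X,\mathcal Y,\mathcal Z$ be finite-dimensional real Euclidean spaces with inner products $\langle\cdot,\cdot\rangle$ and induced norms $\|\cdot\|$. Let $p:\mathcal X\to(-\infty,+\infty]$ and $q:\mathcal Y\to(-\infty,+\infty]$ be closed proper convex functions, and let $f:\mathcal X\to\mathbb R$, $g:\mathcal Y\to\mathbb R$ be convex differentiable functions with Lipschitz continuous gradients. Let $A:\mathcal Z\to\mathcal X$, $B:\mathcal Z\to\mathcal Y$ be linear maps with adjoints $A^*,B^*$, and $c\in\mathcal Z$. Let $\Sigma_f,\widehat\Sigma_f$ (on $\mathcal X$) and $\Sigma_g,\widehat\Sigma_g$ (on $\mathcal Y$) be self-adjoint positive semidefinite linear operators with $\widehat\Sigma_f\succeq\Sigma_f$, $\widehat\Sigma_g\succeq\Sigma_g$, such that for all $x,x'\in\mathcal X$, $y,y'\in\mathcal Y$: $f(x')+\langle x-x',\nabla f(x')\rangle+\frac12\|x-x'\|^2_{\Sigma_f}\le f(x)\le f(x')+\langle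 x-x',\nabla f(x')\rangle+\frac12\|x-x'\|^2_{\widehat\Sigma_f}$ and the analogous two inequalities for $g$ with $\Sigma_g,\widehat\Sigma_g$. For a self-adjoint (possibly indefinite) operator $G$, $\|u\|_G^2:=\langle u,Gu\rangle$. Algorithm (Majorized iPADMM): let $\sigma>0$, $\tau>0$, and let $S:\mathcal X\to\mathcal X$, $T:\mathcal Y\to\mathcal Y$ be self-adjoint, possibly indefinite, linear operators with $\widehat\Sigma_f+S+\sigma AA^*\succeq0$ and $\widehat\Sigma_g+T+\sigma BB^*\succeq0$. Starting from $(x^0,y^0,z^0)\in\mathrm{dom}(p)\times\mathrm{dom}(q)\times\mathcal Z$, for $k=0,1,\dots$: $x^{k+1}\in\arg\min_{x}\{p(x)+\langle\nabla f(x^k),x\rangle+\frac12\|x-x^k\|^2_{\widehat\Sigma_f+S}+\langle z^k,A^*x\rangle+\frac\sigma2\|A^*x+B^*y^k-c\|^2\}$, $y^{k+1}\in\arg\min_{y}\{q(y)+\langle\nabla g(y^k),y\rangle+\frac12\|y-y^k\|^2_{\widehat\Sigma_g+T}+\langle z^k,B^*y\rangle+\frac\sigma2\|A^*x^{k+1}+B^*y-c\|^2\}$, $z^{k+1}=z^k+\tau\sigma(A^*x^{k+1}+B^*y^{k+1}-c)$ (the minimizers are assumed to exist). Notation: $r^k:=A^*x^k+B^*y^k-c$ and $\xi_{k+1}:=\|y^{k+1}-y^k\|^2_{\widehat\Sigma_g+T}$. *)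

(* finite-dimensional Euclidean spaces are rendered as column
   vectors 'cV[R]_n with the standard inner product; linear maps as matrices,
   adjoints as transposes; extended-real valued functions via \bar R. *)
From mathcomp Require Import all_boot all_order all_algebra.
From mathcomp Require Import reals constructive_ereal.
Set Implicit Arguments. Unset Strict Implicit. Unset Printing Implicit Defensive.
Import Order.TTheory GRing.Theory Num.Theory.
Local Open Scope ring_scope.

Section Defs.
Variable R : realType.

Definition ip n (u v : 'cV[R]_n) : R := (u^T *m v) 0 0.
Definition sqn n (u : 'cV[R]_n) : R := ip u u.
Definition enorm n (u : 'cV[R]_n) : R := Num.sqrt (sqn u).
Definition qf n (G : 'M[R]_n) (u : 'cV[R]_n) : R := ip u (G *m u).

Definition self_adjoint n (G : 'M[R]_n) : Prop := G^T = G.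
Definition psd n (G : 'M[R]_n) : Prop := self_adjoint G /\ forall u, 0 <= qf G u.

Definition convex_fun n (f : 'cV[R]_n -> R) : Prop :=
  forall x y (t : R), 0 <= t <= 1 -> f (t *: x + (1 - t) *: y) <= t * f x + (1 - t) * f y.

Definition has_gradient n (f : 'cV[R]_n -> R) (gf : 'cV[R]_n -> 'cV[R]_n) : Prop :=
  forall x (e : R), 0 < e -> exists2 d : R, 0 < d &
    forall h, enorm h < d -> `|f (x + h) - f x - ip (gf x) h| <= e * enorm h.

Definition lipschitz n (F : 'cV[R]_n -> 'cV[R]_n) : Prop :=
  exists L : R, forall x x', enorm (F x - F x') <= L * enorm (x - x').

Definition never_minfty n (p : 'cV[R]_n -> \bar R) : Prop := forall x, p x != -oo%E.
Definition proper_fun n (p : 'cV[R]_n -> \bar R) : Prop :=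
  never_minfty p /\ exists x, (p x < +oo)%E.
Definition econvex_fun n (p : 'cV[R]_n -> \bar R) : Prop :=
  forall (x y : 'cV[R]_n) (t : R), 0 <= t <= 1 ->
    (p (t *: x + (1 - t) *: y)%R <= t%:E * p x + (1 - t)%:E * p y)%E.
(* closed = lower semicontinuous *)
Definition lsc_fun n (p : 'cV[R]_n -> \bar R) : Prop :=
  forall x (a : R), (a%:E < p x)%E -> exists2 d : R, 0 < d &
    forall y, enorm (y - x) < d -> (a%:E < p y)%E.
Definition closed_proper_convex n (p : 'cV[R]_n -> \bar R) : Prop :=
  [/\ proper_fun p, econvex_fun p & lsc_fun p].
Definition in_dom n (p : 'cV[R]_n -> \bar R) (x : 'cV[R]_n) : Prop := (p x < +oo)%E.

Definition is_argmin n (Phi : 'cV[R]_n -> \bar R) (x : 'cV[R]_n) : Prop :=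
  forall x', (Phi x <= Phi x')%E.

End Defs.

(* Write [d = y^{k+2} - y^{k+1}], [d' = y^{k+1} - y^k] and [G = Sgh + T].
   Adding the first-order optimality conditions of two consecutive
   y-subproblems (monotonicity of the subdifferential of [q]) and using the
   multiplier update gives
   [<gg y^{k+1} - gg y^k + G (d - d') + sigma B (r^{k+2} - (1 - tau) r^{k+1}), d> <= 0].
   The two-sided quadratic bounds on [g] give
   [<gg y^{k+1} - gg y^k, d> >= - |d - d'|^2_Sgh / 4], which [Sgh/2 + T >= 0]
   absorbs into [<G (d - d'), d>]; hence
   [2 sigma <r^{k+2}, B^T d> <= xi_{k+1} - xi_{k+2} + 2 (1 - tau) sigma <r^{k+1}, B^T d>],
   and the claim follows by completing a square, separately for
   [tau <= 1] and [tau > 1]. *)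
From mathcomp Require Import all_boot all_order all_algebra.
From mathcomp Require Import reals constructive_ereal.
From mathcomp Require Import ring lra.
Import Order.TTheory GRing.Theory Num.Theory.
Local Open Scope ring_scope.
Set Implicit Arguments. Unset Strict Implicit.

Section InnerProduct.
Variables (R : realType) (n : nat).
Implicit Types u v w : 'cV[R]_n.

Lemma ipC u v : ip u v = ip v u.
Proof. by rewrite /ip -[u^T *m v]trmxK trmx_mul trmxK mxE. Qed.

Lemma ipDl u v w : ip (u + v) w = ip u w + ip v w.
Proof. by rewrite /ip linearD /= mulmxDl mxE. Qed.

Lemma ipDr u v w : ip w (u + v) = ip w u + ip w v.
Proof. by rewrite /ip mulmxDr mxE. Qed.

Lemma ipZl (a : R) u v : ip (a *: u) v = a * ip u v.
Proof. by rewrite /ip linearZ /= -scalemxAl mxE. Qed.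

Lemma ipZr (a : R) u v : ip u (a *: v) = a * ip u v.
Proof. by rewrite /ip -scalemxAr mxE. Qed.

Lemma ipNl u v : ip (- u) v = - ip u v.
Proof. by rewrite -scaleN1r ipZl mulN1r. Qed.

Lemma ipNr u v : ip u (- v) = - ip u v.
Proof. by rewrite -scaleN1r ipZr mulN1r. Qed.

Lemma ipBl u v w : ip (u - v) w = ip u w - ip v w.
Proof. by rewrite ipDl ipNl. Qed.

Lemma sqn_ge0 u : 0 <= sqn u.
Proof. by rewrite /sqn /ip mxE sumr_ge0 // => i _; rewrite mxE -expr2 sqr_ge0. Qed.

Lemma sqnDZ u e (t : R) : sqn (u + t *: e) = sqn u + 2 * t * ip u e + t ^+ 2 * sqn e.
Proof. by rewrite /sqn !ipDl !ipDr !ipZl !ipZr [ip e u]ipC; ring. Qed.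

Lemma sqnB u w : sqn (u - w) = sqn u - 2 * ip u w + sqn w.
Proof. by rewrite -(scaleN1r w) sqnDZ; ring. Qed.

End InnerProduct.

Lemma ip_mulmxl (R : realType) m n (M : 'M[R]_(m, n)) u v :
  ip (M *m u) v = ip u (M^T *m v).
Proof. by rewrite /ip trmx_mul mulmxA. Qed.

Section QuadraticForm.
Variables (R : realType) (n : nat).
Implicit Types (u v e : 'cV[R]_n) (G : 'M[R]_n).

Lemma qfD G1 G2 u : qf (G1 + G2) u = qf G1 u + qf G2 u.
Proof. by rewrite /qf mulmxDl ipDr. Qed.

Lemma qfZ (a : R) G u : qf (a *: G) u = a * qf G u.
Proof. by rewrite /qf -scalemxAl ipZr. Qed.

Lemma qfZv (t : R) G u : qf G (t *: u) = t ^+ 2 * qf G u.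
Proof. by rewrite /qf -scalemxAr ipZl ipZr mulrA -expr2. Qed.

Lemma self_adjoint_ip G u v : self_adjoint G -> ip (G *m u) v = ip u (G *m v).
Proof. by move=> hG; rewrite ip_mulmxl hG. Qed.

Lemma qfDZ G u e (t : R) : self_adjoint G ->
  qf G (u + t *: e) = qf G u + 2 * t * ip (G *m u) e + t ^+ 2 * qf G e.
Proof.
move=> hG; rewrite /qf mulmxDr -scalemxAr !ipDl !ipDr !ipZl !ipZr.
by rewrite -(self_adjoint_ip u e hG) [ip e (G *m u)]ipC; ring.
Qed.

Lemma qfB G u v : self_adjoint G ->
  qf G (u - v) = qf G u - 2 * ip (G *m v) u + qf G v.
Proof.
move=> hG; rewrite -(scaleN1r v) (qfDZ _ _ _ hG) (self_adjoint_ip v u hG).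
by rewrite [ip v (G *m u)]ipC; ring.
Qed.

End QuadraticForm.

Lemma linear_coef_ge0 (R : realFieldType) (a b : R) :
  (forall t : R, 0 < t -> t <= 1 -> 0 <= a * t + b * t ^+ 2) -> 0 <= a.
Proof.
move=> H; rewrite leNgt; apply/negP => a_lt0.
pose M := `|b| + 1.
have hM : b < M by rewrite /M; have := ler_norm b; lra.
have hM0 : 0 < M by rewrite /M; have := normr_ge0 b; lra.
pose t := - a / (M - a).
have hMa : 0 < M - a by lra.
have ht0 : 0 < t by rewrite divr_gt0 // oppr_gt0.
have htM : t * (M - a) = - a by rewrite /t mulfVK // gt_eqF.
have ht1 : t <= 1 by rewrite ler_pdivrMr //; lra.
have h := H t ht0 ht1.
(* [a + b t < a + M t = a t < 0], contradicting [0 <= (a + b t) t]. *)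
have hbt : b * t < M * t by rewrite ltr_pM2r.
have : (a + b * t) * t < 0 by rewrite pmulr_llt0 //; nra.
rewrite mulrDl -mulrA -expr2; lra.
Qed.

Section Argmin.
Variables (R : realType) (n : nat) (q : 'cV[R]_n -> \bar R) (H : 'cV[R]_n -> R).
Variable y1 : 'cV[R]_n.
Hypothesis y1_min : is_argmin (fun v => q v + (H v)%:E)%E y1.

Lemma argmin_fin_num : proper_fun q -> exists Q, q y1 = Q%:E.
Proof.
move=> [q_ninf [x0 x0_dom]]; move: (q_ninf y1) (q_ninf x0) x0_dom (y1_min x0).
by case: (q y1) => [Q| |] //; [exists Q | case: (q x0)].
Qed.

(* For [0 < t <= 1] the minimality of [y1] against [y1 + t (v - y1)] and the
   convexity of [q] give [t (Q1 - Qv) <= t D + t^2 M]; let [t -> 0]. *)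
Lemma argmin_directional v Q1 Qv (D M : R) : econvex_fun q ->
  q y1 = Q1%:E -> q v = Qv%:E ->
  (forall t, H (y1 + t *: (v - y1)) - H y1 = t * D + t ^+ 2 * M) ->
  Q1 - Qv <= D.
Proof.
move=> q_cvx qy1 qv HDM; rewrite -subr_ge0.
apply: (linear_coef_ge0 (b := M)) => t t_gt0 t_le1.
have ht : 0 <= t <= 1 by rewrite ltW.
have := le_trans (y1_min _) (leeD2r (H (t *: v + (1 - t) *: y1))%:E (q_cvx v y1 t ht)).
have -> : t *: v + (1 - t) *: y1 = y1 + t *: (v - y1).
  by apply/matrixP => i j; rewrite !mxE; ring.
rewrite qv qy1 -!EFinM -!EFinD lee_fin.
have := HDM t; lra.
Qed.

End Argmin.

Section YSubproblem.
Variables (R : realType) (ny nz : nat) (B : 'M[R]_(ny, nz)) (c : 'cV[R]_nz).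
Variables (G : 'M[R]_ny) (sigma : R).
Hypothesis G_sym : self_adjoint G.

(* The smooth part of the y-subproblem: [a] is the gradient of [g] at the
   centre [yc], [zz] the multiplier and [P = A^T x^{k+1}]. *)
Definition ysub_obj (a yc : 'cV[R]_ny) (zz P : 'cV[R]_nz) (v : 'cV[R]_ny) : R :=
  ip a v + qf G (v - yc) / 2 + ip zz (B^T *m v) + sigma / 2 * sqn (P + B^T *m v - c).

Definition ysub_grad (a yc : 'cV[R]_ny) (zz P : 'cV[R]_nz) (v : 'cV[R]_ny) :=
  a + G *m (v - yc) + B *m (zz + sigma *: (P + B^T *m v - c)).

Lemma ysub_objDZ a yc zz P v e (t : R) :
  ysub_obj a yc zz P (v + t *: e) - ysub_obj a yc zz P v =
  t * ip (ysub_grad a yc zz P v) e + t ^+ 2 * (qf G e / 2 + sigma / 2 * sqn (B^T *m e)).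
Proof.
rewrite /ysub_obj /ysub_grad !ipDl [ip (B *m _) _]ip_mulmxl ipDl ipZl.
have -> : v + t *: e - yc = (v - yc) + t *: e.
  by apply/matrixP => i j; rewrite !mxE; ring.
have -> : P + B^T *m (v + t *: e) - c = (P + B^T *m v - c) + t *: (B^T *m e).
  by rewrite mulmxDr -scalemxAr; apply/matrixP => i j; rewrite !mxE; ring.
rewrite qfDZ // sqnDZ (mulmxDr B^T) -scalemxAr ![ip a _]ipDr ![ip zz _]ipDr !ipZr.
by field.
Qed.

Lemma ysub_grad_monotone (q : 'cV[R]_ny -> \bar R) a1 yc1 zz1 P1 a0 yc0 zz0 P0 y1 y0 :
  closed_proper_convex q ->
  is_argmin (fun v => q v + (ysub_obj a1 yc1 zz1 P1 v)%:E)%E y1 ->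
  is_argmin (fun v => q v + (ysub_obj a0 yc0 zz0 P0 v)%:E)%E y0 ->
  ip (ysub_grad a1 yc1 zz1 P1 y1 - ysub_grad a0 yc0 zz0 P0 y0) (y1 - y0) <= 0.
Proof.
move=> [q_prop q_cvx _] y1_min y0_min.
have [Q1 qy1] := argmin_fin_num y1_min q_prop.
have [Q0 qy0] := argmin_fin_num y0_min q_prop.
have h1 := argmin_directional y1_min q_cvx qy1 qy0 (ysub_objDZ _ _ _ _ _ _).
have h0 := argmin_directional y0_min q_cvx qy0 qy1 (ysub_objDZ _ _ _ _ _ _).
move: h1 h0; rewrite -[y0 - y1]opprB !ipNr ipBl; lra.
Qed.

End YSubproblem.

(* Evaluate the two-sided bounds at [x' - v/2] about [x] and [x'], and at
   [x + v/2] about [x'] and [x]. *)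
Lemma grad_ip_lower_bound (R : realType) n (g : 'cV[R]_n -> R)
  (gg : 'cV[R]_n -> 'cV[R]_n) (Sg Sgh : 'M[R]_n) : psd Sg ->
  (forall v v', g v' + ip (v - v') (gg v') + qf Sg (v - v') / 2 <= g v /\
                g v <= g v' + ip (v - v') (gg v') + qf Sgh (v - v') / 2) ->
  forall x x' v, - (qf Sgh v / 4) <= ip (gg x - gg x') (x - x' + v).
Proof.
move=> [_ Sg_ge0] g_bnd x x' v.
pose u := (- 2^-1 : R) *: v; pose u' := (2^-1 : R) *: v.
have [l1 _] := g_bnd (x' + u) x; have [_ u2] := g_bnd (x' + u) x'.
have [l3 _] := g_bnd (x + u') x'; have [_ u4] := g_bnd (x + u') x.
have q1 := Sg_ge0 (x' + u - x); have q3 := Sg_ge0 (x + u' - x').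
move: u2 u4; rewrite [x' + u - x']addrAC subrr add0r [x + u' - x]addrAC subrr add0r.
rewrite !qfZv => u2 u4.
move: l1 l3 u2 u4 q1 q3; rewrite /u /u' !ipBl !ipDl !ipZl => l1 l3 u2 u4 q1 q3.
rewrite [ip (gg x) _]ipC [ip (gg x') _]ipC !ipDl ?ipBl ?ipNl.
lra.
Qed.

(* [a = |r^{k+2}|^2], [b = |r^{k+1}|^2], [s = |w|^2], [p = <r^{k+2}, w>],
   [p0 = <r^{k+1}, w>] with [w = B^T d], and [e = xi_{k+2} - xi_{k+1}]. *)
Lemma residual_scalar_ineq (R : realFieldType) (sigma tau a b s p p0 e : R) :
  0 < sigma -> 0 < tau ->
  2 * sigma * p <= - e + 2 * (1 - tau) * sigma * p0 ->
  0 <= s - 2 * p0 + b -> 0 <= b + 2 * tau * p0 + tau ^+ 2 * s ->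
  Num.max (1 - tau) (1 - tau^-1) * sigma * (a - b) + e
    + Num.min tau (1 + tau - tau ^+ 2) * sigma * (tau^-1 * a + s)
  <= (1 - tau) * sigma * a + sigma * (a - 2 * p + s).
Proof.
move=> sigma_gt0 tau_gt0 key sq1 sq2.
have tauV_gt0 : 0 < tau^-1 by rewrite invr_gt0.
have [tau_le1 | tau_gt1] := lerP tau 1.
  have tauV_ge1 : 1 <= tau^-1 by rewrite invf_ge1.
  rewrite max_l; last by lra.
  rewrite min_l; last by nra.
  have : 0 <= sigma * (1 - tau) * (s - 2 * p0 + b) by do 2?[apply: mulr_ge0]; lra.
  have -> : tau * sigma * (tau^-1 * a + s) = sigma * a + tau * sigma * s.
    by field; rewrite gt_eqF.
  lra.
have tauV_le1 : tau^-1 <= 1 by rewrite invf_le1 // ltW.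
rewrite max_r; last by lra.
rewrite min_r; last by nra.
have : 0 <= sigma * (tau - 1) * tau^-1 * (b + 2 * tau * p0 + tau ^+ 2 * s).
  by do 3?[apply: mulr_ge0]; lra.
have -> : sigma * (tau - 1) * tau^-1 * (b + 2 * tau * p0 + tau ^+ 2 * s)
    = sigma * (tau - 1) * tau * s + 2 * sigma * (tau - 1) * p0
      + sigma * (1 - tau^-1) * b by field; rewrite gt_eqF.
have -> : (1 + tau - tau ^+ 2) * sigma * (tau^-1 * a + s)
    = (tau^-1 + 1 - tau) * sigma * a + (1 + tau - tau ^+ 2) * sigma * s
  by field; rewrite gt_eqF.
nra.
Qed.

Unset Implicit Arguments. Set Strict Implicit.

Theorem lemma3p3 (R : realType) (nx ny nz : nat)
  (p : 'cV[R]_nx -> \bar R) (q : 'cV[R]_ny -> \bar R)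
  (f : 'cV[R]_nx -> R) (gf : 'cV[R]_nx -> 'cV[R]_nx)
  (g : 'cV[R]_ny -> R) (gg : 'cV[R]_ny -> 'cV[R]_ny)
  (A : 'M[R]_(nx, nz)) (B : 'M[R]_(ny, nz)) (c : 'cV[R]_nz)
  (Sf Sfh S : 'M[R]_nx) (Sg Sgh T : 'M[R]_ny) (sigma tau : R)
  (x : nat -> 'cV[R]_nx) (y : nat -> 'cV[R]_ny) (z : nat -> 'cV[R]_nz) :
  closed_proper_convex p -> closed_proper_convex q ->
  convex_fun f -> has_gradient f gf -> lipschitz gf ->
  convex_fun g -> has_gradient g gg -> lipschitz gg ->
  psd Sf -> psd Sfh -> psd (Sfh - Sf) ->
  psd Sg -> psd Sgh -> psd (Sgh - Sg) ->
  (forall u u', f u' + ip (u - u') (gf u') + qf Sf (u - u') / 2 <= f u /\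
                f u <= f u' + ip (u - u') (gf u') + qf Sfh (u - u') / 2) ->
  (forall v v', g v' + ip (v - v') (gg v') + qf Sg (v - v') / 2 <= g v /\
                g v <= g v' + ip (v - v') (gg v') + qf Sgh (v - v') / 2) ->
  0 < sigma -> 0 < tau ->
  self_adjoint S -> self_adjoint T ->
  psd (Sfh + S + sigma *: (A *m A^T)) -> psd (Sgh + T + sigma *: (B *m B^T)) ->
  psd (2^-1 *: Sgh + T) ->
  in_dom p (x 0%N) -> in_dom q (y 0%N) ->
  (forall k : nat,
     is_argmin (fun u => p u + (ip (gf (x k)) u + qf (Sfh + S) (u - x k) / 2
                 + ip (z k) (A^T *m u)
                 + sigma / 2 * sqn (A^T *m u + B^T *m y k - c))%:E)%E (x k.+1)) ->
  (forall k : nat,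
     is_argmin (fun v => q v + (ip (gg (y k)) v + qf (Sgh + T) (v - y k) / 2
                 + ip (z k) (B^T *m v)
                 + sigma / 2 * sqn (A^T *m x k.+1 + B^T *m v - c))%:E)%E (y k.+1)) ->
  (forall k : nat,
     z k.+1 = z k + (tau * sigma) *: (A^T *m x k.+1 + B^T *m y k.+1 - c)) ->
  let r k := A^T *m x k + B^T *m y k - c in
  let xi k := qf (Sgh + T) (y k - y k.-1) in
  forall k : nat, (1 <= k)%N ->
    (1 - tau) * sigma * sqn (r k.+1) + sigma * sqn (A^T *m x k.+1 + B^T *m y k - c)
    >= Num.max (1 - tau) (1 - tau^-1) * sigma * (sqn (r k.+1) - sqn (r k))
       + (xi k.+1 - xi k)
       + Num.min tau (1 + tau - tau ^+ 2) * sigma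
           * (tau^-1 * sqn (r k.+1) + sqn (B^T *m (y k.+1 - y k))).
Proof.
move=> _ q_cpc _ _ _ _ _ _ _ _ _ Sg_psd [Sgh_sym _] _ _ g_bnd sigma_gt0 tau_gt0
  _ T_sym _ _ half_psd _ _ _ y_min z_upd r xi [//|k] _.
rewrite /r /xi /= {r xi}.
set G := Sgh + T.
have G_sym : self_adjoint G by rewrite /self_adjoint linearD /= Sgh_sym T_sym.
have mono := @ysub_grad_monotone _ _ _ B c G sigma G_sym _ _ _ _ _ _ _ _ _ _ _
  q_cpc (y_min k.+1) (y_min k).
have lower := grad_ip_lower_bound Sg_psd g_bnd (y k.+1) (y k)
  ((y k.+2 - y k.+1) - (y k.+1 - y k)).
move: mono lower; rewrite /ysub_grad z_upd [_ + (_ - _)]addrC subrK.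
set d := y k.+2 - y k.+1; set d' := y k.+1 - y k.
set r1 := A^T *m x k.+1 + B^T *m y k.+1 - c; set r2 := A^T *m x k.+2 + B^T *m y k.+2 - c.
set w := B^T *m d.
rewrite !ipBl !ipDl ![ip (B *m _) _]ip_mulmxl !ipDl !ipZl -/w => mono lower.
have := half_psd.2 (d - d'); rewrite qfD qfZ => half.
have qfG_dd' : qf G (d - d') = qf Sgh (d - d') + qf T (d - d') by rewrite qfD.
have qfB_dd' := qfB d d' G_sym.
have key : 2 * sigma * ip r2 w <= - (qf G d - qf G d') + 2 * (1 - tau) * sigma * ip r1 w.
  move: mono; rewrite [ip (G *m d) d]ipC -[ip d (G *m d)]/(qf G d); lra.
have -> : A^T *m x k.+2 + B^T *m y k.+1 - c = r2 - w.
  by rewrite /r2 /w /d mulmxBr; apply/matrixP => i j; rewrite !mxE; ring.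
rewrite (sqnB r2 w).
apply: (@residual_scalar_ineq _ sigma tau (sqn r2) (sqn r1) (sqn w) _ _ _
  sigma_gt0 tau_gt0 key).
- by have := sqn_ge0 (w - r1); rewrite sqnB [ip w r1]ipC.
- by have := sqn_ge0 (r1 + tau *: w); rewrite sqnDZ.
Qed.
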